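(* Let $q=p^m$ be a prime power and let $J_{\mathbb{F}_q}$ be the group of unitaries on $\mathbb{C}^q$ generated by $F$, $P_\gamma$ and $M_\gamma$ for all $\gamma\in\mathbb{F}_q\setminus\{0\}$. Then $J_{\mathbb{F}_q}$ acts by conjugation transitively on the non-trivial elements of $\mathcal{G}_1/\langle\omega I\rangle$: for any $(\alpha,\beta),(\alpha',\beta')\in\mathbb{F}_q^2\setminus\{(0,0)\}$ there is $U\in J_{\mathbb{F}_q}$ such that $U^{-1}X_\alpha Z_\beta U$ is a scalar multiple of $X_{\alpha'}Z_{\beta'}$.
   Context: Let $\omega=\exp(2\pi i/p)$ and $\mathrm{tr}(\alpha)=\sum_{k=0}^{m-1}\alpha^{p^k}\in\mathbb{F}_p$ (identified with $\mathbb{Z}/p\mathbb{Z}$ in exponents of $\omega$). On $\mathbb{C}^q$ with orthonormal basis $\{|x\rangle:x\in\mathbb{F}_q\}$ define $X_\alpha=\sum_x|x+\alpha\rangle\langle x|$, $Z_\beta=\sum_z\omega^{\mathrm{tr}(\beta z)}|z\rangle\langle z|$, $M_\gamma=\sum_y|\gamma y\rangle\langle y|$ ($\gamma\neq0$), $F=\frac1{\sqrt q}\sum_{x,z}\omega^{\mathrm{tr}(xz)}|z\rangle\langle x|$. The error group $\mathcal{G}_1$ is the group generated by all $X_\alpha Z_\beta$, with center $\langle\omega I\rangle$. For $q$ odd, $P_\gamma=\sum_y\omega^{-\mathrm{tr}(\frac12\gamma y^2)}|y\rangle\langle y|$. For $q=2^m$, fix a self-dual basis $\{b_1,\dots,b_m\}$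 of $\mathbb{F}_q$ over $\mathbb{F}_2$ ($\mathrm{tr}(b_ib_j)=\delta_{ij}$), let $\mathrm{wgt}(y)=|\{j:\mathrm{tr}(yb_j)\ne0\}|$, $P_1=\sum_y(-i)^{\mathrm{wgt}(y)}|y\rangle\langle y|$, and $P_\gamma=M_{\gamma_0}^{-1}P_1M_{\gamma_0}$ where $\gamma_0^2=\gamma$. *)

From HB Require Import structures.
From mathcomp Require Import all_boot all_order all_algebra.
From mathcomp Require Import algC.
Set Implicit Arguments. Unset Strict Implicit. Unset Printing Implicit Defensive.
Import Order.TTheory GRing.Theory Num.Theory.
Local Open Scope ring_scope.

Section Defs.
Variables (K : finFieldType) (p : nat) (omega : algC).

Definition mdeg : nat := logn p #|K|.

Definition trK (a : K) : K := \sum_(k < mdeg) a ^+ (p ^ k).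

(* the trace as an exponent in Z/pZ, represented by some n < p with n%:R = tr a *)
Definition trexp (a : K) : nat := odflt 0%N (omap val [pick n : 'I_p | (n%:R : K) == trK a]).

Definition wtr (a : K) : algC := omega ^+ trexp a.

(* matrices on C^q with the orthonormal basis indexed by K (via enum_val) *)
Notation q := #|K|.
Definition mxK (f : K -> K -> algC) : 'M[algC]_q :=
  \matrix_(i, j) f (enum_val i) (enum_val j).

Definition Xop (alpha : K) := mxK (fun u v => (u == v + alpha)%:R).
Definition Zop (beta : K) := mxK (fun u v => (u == v)%:R * wtr (beta * u)).
Definition Mop (gamma : K) := mxK (fun u v => (u == gamma * v)%:R).
Definition Fop := mxK (fun z x => wtr (x * z) / sqrtC (q%:R)).

Definition Podd (gamma : K) :=
  mxK (fun u v => (u == v)%:R * (wtr (gamma * u ^+ 2 / 2))^-1).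

Definition self_dual (b : 'I_mdeg -> K) :=
  forall i j : 'I_mdeg, trK (b i * b j) = (i == j)%:R.
Definition wgt (b : 'I_mdeg -> K) (y : K) : nat :=
  #|[set j : 'I_mdeg | trK (y * b j) != 0]|.
Definition P1even (b : 'I_mdeg -> K) :=
  mxK (fun u v => (u == v)%:R * (- 'i) ^+ wgt b u).
(* the (unique) square root gamma0 of gamma in characteristic 2 *)
Definition sqrt2 (gamma : K) : K := odflt 1 [pick g : K | g ^+ 2 == gamma].
Definition Peven (b : 'I_mdeg -> K) (gamma : K) :=
  invmx (Mop (sqrt2 gamma)) *m P1even b *m Mop (sqrt2 gamma).

Definition Pop (b : 'I_mdeg -> K) (gamma : K) :=
  if p == 2%N then Peven b gamma else Podd gamma.

Inductive inJ (b : 'I_mdeg -> K) : 'M[algC]_q -> Prop :=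
  | inJ_F : inJ b Fop
  | inJ_P gamma : gamma != 0 -> inJ b (Pop b gamma)
  | inJ_M gamma : gamma != 0 -> inJ b (Mop gamma)
  | inJ_1 : inJ b 1%:M
  | inJ_mul U V : inJ b U -> inJ b V -> inJ b (U *m V)
  | inJ_inv U : inJ b U -> inJ b (invmx U).

End Defs.

From HB Require Import structures.
From mathcomp Require Import all_boot all_order all_algebra all_field.
From mathcomp Require Import algC ring.
Set Implicit Arguments. Unset Strict Implicit. Unset Printing Implicit Defensive.
Import GRing.Theory Num.Theory.
Local Open Scope ring_scope.

(* Write W a c for X_a Z_c.  Up to nonzero scalars, conjugation by M_g, F and
   P_g maps W a c to W (a / g) (c g), W c (-a) and W a (c + g a) respectively,
   the last one by completing the square, which needs p odd.  In characteristic
   2 the phases (-i)^wgt of P1 multiply like the additive character, because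
   wgt is additive up to twice the overlap of coordinates in the self-dual
   basis, so P1 maps W a c to W a (c + a).  These moves carry every nonzero
   (a, c) to (1, 0): F makes a nonzero, P_g (or M_g followed by P1 when p = 2)
   kills c, and M_a normalises a. *)

Section Trace.
Variables (K : finFieldType) (p : nat).
Hypothesis pcharKp : p \in [pchar K].
Local Notation m := (mdeg K p).
Local Notation tr := (@trK K p).

Let p_prime : prime p := pcharf_prime pcharKp.

Lemma card_pchar : #|K| = (p ^ m)%N.
Proof. exact: card_pprimeChar pcharKp. Qed.

Lemma mdeg_gt0 : (0 < m)%N.
Proof. by have := finNzRing_gt1 K; rewrite card_pchar; case: m. Qed.

Lemma trKD (x y : K) : tr (x + y) = tr x + tr y.
Proof.
rewrite /trK -big_split; apply: eq_bigr => k _.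
by apply: exprDn_pchar; rewrite pnatX (pnatE _ p_prime) pcharKp.
Qed.

Lemma trK0 : tr 0 = 0.
Proof. by rewrite /trK big1 // => k _; rewrite expr0n expn_eq0 eqn0Ngt prime_gt0. Qed.

Lemma trK_sum (I : Type) (r : seq I) (P : pred I) (f : I -> K) :
  tr (\sum_(j <- r | P j) f j) = \sum_(j <- r | P j) tr (f j).
Proof. exact: (big_morph _ trKD trK0). Qed.

(* The Frobenius map permutes the summands of the trace cyclically. *)
Lemma trK_frob (x : K) : tr x ^+ p = tr x.
Proof.
rewrite /trK -(pFrobenius_autE pcharKp) rmorph_sum /=.
under eq_bigr => k _ do rewrite pFrobenius_autE -exprM -expnSr.
case Em: m mdeg_gt0 => [//|n] _.
rewrite big_ord_recr big_ord_recl /= expn0 expr1.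
have -> : x ^+ (p ^ n.+1) = x by rewrite -Em -card_pchar expf_card.
by rewrite addrC.
Qed.

Lemma natr_eq_pchar (n1 n2 : nat) :
  n1%:R = n2%:R :> K -> (n1 = n2 %[mod p])%N.
Proof.
wlog le_n12 : n1 n2 / (n1 <= n2)%N => [hwlog|].
  by case: (leqP n1 n2) => [|/ltnW] /hwlog hn12 // /esym/hn12.
move=> En; apply/esym/eqP; rewrite eqn_mod_dvd // (dvdn_pcharf pcharKp).
by rewrite natrB // En subrr.
Qed.

(* The fixed points of the Frobenius map are the roots of 'X^p - 'X, which
   are exactly the p elements of the prime field. *)
Lemma frob_fixed_natr (x : K) : x ^+ p = x -> exists n : 'I_p, n%:R = x.
Proof.
move=> fix_x; case: (pickP (fun n : 'I_p => n%:R == x)) => [n /eqP <-|notF].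
  by exists n.
pose P : {poly K} := 'X^p - 'X.
have sizeP : size P = p.+1.
  by rewrite /P size_polyDl ?size_polyXn // size_polyN size_polyX ltnS prime_gt1.
have P_neq0 : P != 0 by rewrite -size_poly_eq0 sizeP.
pose rs := x :: [seq (val n)%:R | n <- enum 'I_p] : seq K.
have rootsP : all (root P) rs.
  apply/allP => y; rewrite inE => /orP[/eqP->|/mapP[n _ ->]];
    rewrite /root /P !hornerE ?fix_x ?subrr //.
  by rewrite -(pFrobenius_autE pcharKp) pFrobenius_aut_nat subrr.
have uniq_rs : uniq rs.
  rewrite /= map_inj_uniq ?enum_uniq ?andbT.
    by apply/mapP => -[n _ /esym/eqP]; rewrite notF.
  move=> n1 n2 /natr_eq_pchar; rewrite !modn_small //.
  by move/val_inj.
have := max_poly_roots P_neq0 rootsP uniq_rs.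
by rewrite sizeP /= size_map size_enum_ord ltnn.
Qed.

Lemma trexp_lt (a : K) : (trexp p a < p)%N.
Proof. by rewrite /trexp; case: pickP => [n _|_] //=; rewrite prime_gt0. Qed.

Lemma natr_trexp (a : K) : (trexp p a)%:R = tr a.
Proof.
have [n En] := frob_fixed_natr (trK_frob a).
rewrite /trexp; case: pickP => [n' /eqP //|/(_ n)].
by rewrite En eqxx.
Qed.

(* The trace is a polynomial of degree p ^ (m - 1) < #|K|, so it cannot
   vanish on all of K. *)
Lemma trK_nontrivial : exists x : K, tr x != 0.
Proof.
case: (pickP (fun x : K => tr x != 0)) => [x trx|tr_eq0]; first by exists x.
pose T : {poly K} := \sum_(k < m) 'X^(p ^ k).
have lt_m1 : (m.-1 < m)%N by rewrite ltn_predL mdeg_gt0.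
have T_neq0 : T != 0.
  apply/eqP => /(congr1 (fun P : {poly K} => P`_(p ^ m.-1))).
  rewrite coef0 /T coef_sum (bigD1 (Ordinal lt_m1)) //= coefXn eqxx big1.
    by rewrite addr0; apply/eqP; rewrite oner_eq0.
  move=> k; rewrite -val_eqE /= coefXn eqn_exp2l ?prime_gt1 //.
  by rewrite eq_sym => /negbTE->.
have sizeT : (size T <= (p ^ m.-1).+1)%N.
  apply: leq_trans (size_sum _ _ _) _.
  apply/bigmax_leqP => k _; rewrite size_polyXn ltnS leq_exp2l ?prime_gt1 //.
  by rewrite -ltnS prednK ?mdeg_gt0.
have rootsT : all (root T) (enum K).
  apply/allP => y _; rewrite /root /T horner_sum.
  under eq_bigr => k _ do rewrite hornerXn.
  exact: negbFE (tr_eq0 y).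
have := max_poly_roots T_neq0 rootsT (enum_uniq K).
rewrite -cardE card_pchar => /(leq_trans)/(_ sizeT).
rewrite ltnS -{1}(prednK mdeg_gt0) expnS leqNgt ltn_Pmull ?prime_gt1 //.
by rewrite expn_gt0 prime_gt0.
Qed.

End Trace.

Section Character.
Variables (K : finFieldType) (p : nat) (omega : algC).
Hypotheses (pcharKp : p \in [pchar K]) (omega_prim : p.-primitive_root omega).
Local Notation w := (@wtr K p omega).

Lemma wtr_neq0 (a : K) : w a != 0.
Proof.
rewrite /wtr expf_neq0 //; apply/eqP => omega0.
have := prim_expr_order omega_prim; rewrite omega0 expr0n.
rewrite gtn_eqF ?prime_gt0 ?(pcharf_prime pcharKp) // => /eqP.
by rewrite eq_sym oner_eq0.
Qed.

Lemma wtrD (a1 a2 : K) : w (a1 + a2) = w a1 * w a2.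
Proof.
rewrite /wtr -exprD -(prim_expr_mod omega_prim (trexp p (a1 + a2))).
rewrite -(prim_expr_mod omega_prim (_ + _)); congr (_ ^+ _).
by apply: (natr_eq_pchar pcharKp); rewrite natrD !(natr_trexp pcharKp) trKD.
Qed.

Lemma wtr0 : w 0 = 1.
Proof. by apply: (mulfI (wtr_neq0 0)); rewrite -wtrD addr0 mulr1. Qed.

Lemma wtr_nontrivial : exists x : K, w x != 1.
Proof.
have [x trx] := trK_nontrivial pcharKp; exists x.
rewrite /wtr -(prim_order_dvd omega_prim); apply: contra trx => /dvdn_leq.
rewrite -(natr_trexp pcharKp); case Etr: (trexp p x) => [//|n] /(_ isT).
by rewrite leqNgt -Etr trexp_lt.
Qed.

(* Orthogonality of additive characters: translating the summation variable
   multiplies the sum by some w x0 != 1. *)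
Lemma sum_wtr_mul (a : K) : a != 0 -> \sum_(x : K) w (x * a) = 0.
Proof.
move=> a_neq0; have [x0 wx0] := wtr_nontrivial.
set S := \sum_(x : K) _.
have S_shift : S = S * w x0.
  rewrite {1}/S (reindex_inj (addIr (x0 / a))) /= /S mulr_suml.
  by apply: eq_bigr => x _; rewrite mulrDl divfK // wtrD.
move/eqP: S_shift; rewrite -subr_eq0 -{1}(mulr1 S) -mulrBr mulf_eq0 subr_eq0.
by rewrite [1 == _]eq_sym (negbTE wx0) orbF => /eqP.
Qed.

End Character.

Section MatrixCalculus.
Variable K : finFieldType.

Lemma eq_mxK (f g : K -> K -> algC) : f =2 g -> mxK f = mxK g.
Proof. by move=> efg; apply/matrixP => i j; rewrite !mxE efg. Qed.

Lemma mul_mxK (f g : K -> K -> algC) :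
  mxK f *m mxK g = mxK (fun u v => \sum_(y : K) f u y * g y v).
Proof.
apply/matrixP => i j; rewrite !mxE.
rewrite (big_enum_val (A := K) (fun y => f (enum_val i) y * g y (enum_val j))).
by apply: eq_bigr => k _; rewrite !mxE.
Qed.

Lemma scale_mxK (c : algC) (f : K -> K -> algC) :
  c *: mxK f = mxK (fun u v => c * f u v).
Proof. by apply/matrixP => i j; rewrite !mxE. Qed.

Lemma mxK1 : 1%:M = mxK (fun u v : K => (u == v)%:R).
Proof. by apply/matrixP => i j; rewrite !mxE (inj_eq enum_val_inj). Qed.

Lemma sum_deltal (c : K) (g : K -> algC) : \sum_(y : K) (y == c)%:R * g y = g c.
Proof.
rewrite (bigD1 c) //= eqxx mul1r big1 ?addr0 // => y /negbTE->.
by rewrite mul0r.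
Qed.

Lemma sum_deltar (c : K) (g : K -> algC) : \sum_(y : K) g y * (y == c)%:R = g c.
Proof. by rewrite -(sum_deltal c g); apply: eq_bigr => y _; rewrite mulrC. Qed.

End MatrixCalculus.

Section Weyl.
Variables (K : finFieldType) (p : nat) (omega : algC).
Hypotheses (pcharKp : p \in [pchar K]) (omega_prim : p.-primitive_root omega).
Local Notation w := (@wtr K p omega).
Local Notation Z := (Zop p omega).
Local Notation F := (Fop K p omega).

Definition Wop (a b : K) : 'M[algC]_#|K| := Xop a *m Z b.

Lemma WopE (a b : K) : Wop a b = mxK (fun u v => (u == v + a)%:R * w (b * v)).
Proof.
rewrite /Wop /Xop /Zop mul_mxK; apply: eq_mxK => u v.
by under eq_bigr => y _ do rewrite mulrCA; rewrite sum_deltal.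
Qed.

Lemma Mop_mulV (g : K) : g != 0 -> Mop g *m Mop g^-1 = 1%:M.
Proof.
move=> g_neq0; rewrite /Mop mul_mxK mxK1; apply: eq_mxK => u v.
by rewrite sum_deltar mulrA mulfV // mul1r.
Qed.

Lemma Mop_unit (g : K) : g != 0 -> Mop g \in unitmx.
Proof. by move/Mop_mulV/mulmx1_unit => []. Qed.

Lemma Wop_Mop (a b g : K) : g != 0 -> Wop a b *m Mop g = Mop g *m Wop (a / g) (b * g).
Proof.
move=> g_neq0; rewrite !WopE /Mop !mul_mxK; apply: eq_mxK => u v.
rewrite sum_deltar; under eq_bigr => y _ do rewrite mulrCA.
by rewrite sum_deltal mulrDr [g * (a / g)]mulrC divfK // mulrA.
Qed.

Lemma Fop_unit : F \in unitmx.
Proof.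
pose s : algC := sqrtC #|K|%:R.
have cardK_neq0 : #|K|%:R != 0 :> algC.
  by rewrite pnatr_eq0 -lt0n; apply/card_gt0P; exists 0.
suff /mulmx1_unit[] : F *m mxK (fun x z => w (- (z * x)) / s) = 1%:M by [].
rewrite /Fop mul_mxK mxK1; apply: eq_mxK => u v.
under eq_bigr => y _ do rewrite mulrACA -wtrD // [v * _]mulrC -mulrBr.
rewrite -mulr_suml; case: eqP => [->|/eqP uv].
  under eq_bigr => y _ do rewrite subrr mulr0 (wtr0 pcharKp omega_prim).
  by rewrite sumr_const -invfM -expr2 sqrtCK -mulr_natl mulfV // mulr1.
by rewrite sum_wtr_mul ?subr_eq0 // mul0r.
Qed.

Lemma Xop_Fop (a : K) : Xop a *m F = F *m Z (- a).
Proof.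
rewrite /Fop /Xop /Zop !mul_mxK; apply: eq_mxK => u x.
under eq_bigr => y _ do rewrite -subr_eq eq_sym.
rewrite sum_deltal; under eq_bigr => y _ do rewrite mulrCA.
by rewrite sum_deltal mulrAC -wtrD //; congr (w _ / _); ring.
Qed.

Lemma Zop_Fop (b : K) : Z b *m F = F *m Xop b.
Proof.
rewrite /Fop /Xop /Zop !mul_mxK; apply: eq_mxK => u x.
under eq_bigr => y _ do rewrite eq_sym -mulrA.
rewrite sum_deltal; under eq_bigr => y _ do rewrite mulrC.
by rewrite sum_deltal mulrA -wtrD //; congr (w _ / _); ring.
Qed.

Lemma Zop_Xop (c b : K) : Z c *m Xop b = w (c * b) *: (Xop b *m Z c).
Proof.
rewrite -/(Wop b c) WopE /Xop /Zop mul_mxK scale_mxK; apply: eq_mxK => u v.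
under eq_bigr => y _ do rewrite eq_sym -mulrA.
rewrite sum_deltal; case: eqP => [->|_]; last by rewrite !mul0r !mulr0.
by rewrite mulr1 mul1r -wtrD //; congr w; ring.
Qed.

Lemma Wop_Fop (a b : K) : Wop a b *m F = F *m (w (- a * b) *: Wop b (- a)).
Proof. by rewrite /Wop -mulmxA Zop_Fop mulmxA Xop_Fop -mulmxA Zop_Xop. Qed.

Lemma Podd_unit (g : K) : Podd p omega g \in unitmx.
Proof.
suff /mulmx1_unit[] :
  Podd p omega g *m mxK (fun u v => (u == v)%:R * w (g * u ^+ 2 / 2)) = 1%:M by [].
rewrite /Podd mul_mxK mxK1; apply: eq_mxK => u v.
under eq_bigr => y _ do rewrite mulrCA.
rewrite sum_deltal; case: eqP => [->|_]; last by rewrite !mul0r.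
by rewrite mul1r mulVf ?wtr_neq0.
Qed.

(* Completing the square: g (v + a)^2 / 2 = g v^2 / 2 + g a v + g a^2 / 2. *)
Lemma Wop_Podd (g a b : K) : p != 2%N ->
  Wop a b *m Podd p omega g =
  Podd p omega g *m (w (g * a ^+ 2 / 2) *: Wop a (b + g * a)).
Proof.
move=> p_neq2.
have two_neq0 : 2%:R != 0 :> K.
  by rewrite -(dvdn_pcharf pcharKp) dvdn_prime2 ?(pcharf_prime pcharKp).
rewrite !WopE /Podd scale_mxK !mul_mxK; apply: eq_mxK => u v.
under eq_bigr => y _ do rewrite mulrCA.
rewrite sum_deltal; under eq_bigr => y _ do rewrite [u == y]eq_sym -[_%:R / _ * _]mulrA.
rewrite sum_deltal; case: eqP => [->|_]; last by rewrite !mul0r !mulr0.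
have -> : g * (v + a) ^+ 2 / 2 = g * v ^+ 2 / 2 + g * a * v + g * a ^+ 2 / 2.
  by field.
rewrite mulrDl !wtrD //.
by field; rewrite ?(wtr_neq0 pcharKp omega_prim).
Qed.

End Weyl.

Lemma P1even_unit (K : finFieldType) (p : nat) (b : 'I_(mdeg K p) -> K) :
  P1even b \in unitmx.
Proof.
suff /mulmx1_unit[] : P1even b *m mxK (fun u v => (u == v)%:R * 'i ^+ wgt b u) = 1%:M.
  by [].
rewrite /P1even mul_mxK mxK1; apply: eq_mxK => u v.
under eq_bigr => y _ do rewrite [u == y]eq_sym -mulrA.
by rewrite sum_deltal mulrCA -exprMn mulNr -expr2 sqrCi opprK expr1n mulr1.
Qed.

Section Char2.
Variables (K : finFieldType) (omega : algC) (b : 'I_(mdeg K 2) -> K).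
Hypotheses (pcharK2 : 2%N \in [pchar K]) (omega_prim : 2.-primitive_root omega).
Hypothesis b_self_dual : self_dual b.
Local Notation m := (mdeg K 2).
Local Notation tr := (@trK K 2).
Local Notation w := (@wtr K 2 omega).

Lemma trK01 (x : K) : tr x = 0 \/ tr x = 1.
Proof.
rewrite -(natr_trexp pcharK2); have := trexp_lt pcharK2 x.
by case: (trexp 2 x) => [|[|//]] _; [left|right].
Qed.

(* By self-duality, tr (y * b j) is the j-th coordinate of y in the basis b. *)
Definition coord (y : K) : {ffun 'I_m -> bool} := [ffun j => tr (y * b j) != 0].
Definition of_coord (f : {ffun 'I_m -> bool}) : K := \sum_(j | f j) b j.

Lemma trK_of_coord (f : {ffun 'I_m -> bool}) i : tr (of_coord f * b i) = (f i)%:R.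
Proof.
rewrite /of_coord mulr_suml (trK_sum pcharK2).
under eq_bigr => j _ do rewrite b_self_dual.
case fi: (f i).
  by rewrite (bigD1 i) //= eqxx big1 ?addr0 // => j /andP[_ /negbTE->].
by rewrite big1 // => j fj; case: eqP => // Eji; move: fj; rewrite Eji fi.
Qed.

Lemma of_coordK : cancel of_coord coord.
Proof.
move=> f; apply/ffunP => i; rewrite ffunE trK_of_coord.
by case: (f i); rewrite ?eqxx ?oner_eq0.
Qed.

Lemma coordK : cancel coord of_coord.
Proof.
have card_le : (#|K| <= #|{ffun 'I_m -> bool}|)%N.
  by rewrite card_ffun card_bool card_ord (card_pchar pcharK2).
move=> y; have /codomP[f ->] := inj_card_onto (can_inj of_coordK) card_le y.
by rewrite of_coordK.
Qed.

Lemma trK_coord (x : K) j : tr (x * b j) = (coord x j)%:R.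
Proof. by rewrite ffunE; case: (trK01 (x * b j)) => ->; rewrite ?eqxx ?oner_eq0. Qed.

Lemma trK_mul_coord (x y : K) :
  tr (x * y) = (\sum_j (coord x j && coord y j) : nat)%:R.
Proof.
rewrite -{1}(coordK y) /of_coord mulr_sumr (trK_sum pcharK2) natr_sum big_mkcond /=.
apply: eq_bigr => j _; rewrite trK_coord.
by case: (coord y j); rewrite ?andbT ?andbF.
Qed.

Lemma coordD (x y : K) j : coord (x + y) j = coord x j (+) coord y j.
Proof.
have := trK_coord (x + y) j; rewrite mulrDl trKD // !trK_coord.
have two_eq0 : 1 + 1 = 0 :> K by have := pcharf0 pcharK2.
by case: (coord x j); case: (coord y j); case: (coord (x + y) j) => //=;
  rewrite ?addr0 ?add0r ?two_eq0 => /eqP; rewrite ?oner_eq0 // eq_sym oner_eq0.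
Qed.

Lemma wgt_coord (y : K) : wgt b y = (\sum_j coord y j : nat).
Proof.
rewrite /wgt -sum1_card big_mkcond /=; apply: eq_bigr => j _.
by rewrite inE ffunE; case: (_ != 0).
Qed.

Lemma wgtD (x y : K) :
  (wgt b (x + y)%R + 2 * \sum_j (coord x j && coord y j) = wgt b x + wgt b y)%N.
Proof.
rewrite !wgt_coord big_distrr /= -!big_split /=; apply: eq_bigr => j _.
by rewrite coordD; case: (coord x j); case: (coord y j).
Qed.

Lemma omega_eqN1 : omega = -1.
Proof.
have omega_neq1 : omega != 1.
  by rewrite -[omega]expr1 -(prim_order_dvd omega_prim 1).
have : (omega - 1) * (omega + 1) = 0.
  have -> : (omega - 1) * (omega + 1) = omega ^+ 2 - 1 by ring.
  by rewrite (prim_expr_order omega_prim) subrr.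
by move/eqP; rewrite mulf_eq0 subr_eq0 (negbTE omega_neq1) addr_eq0 => /eqP.
Qed.

Lemma wtr_mul_coord (x y : K) : w (x * y) = omega ^+ (\sum_j (coord x j && coord y j)).
Proof.
rewrite /wtr -(prim_expr_mod omega_prim) -[RHS](prim_expr_mod omega_prim).
by congr (_ ^+ _); apply: (natr_eq_pchar pcharK2); rewrite natr_trexp // trK_mul_coord.
Qed.

Local Notation phase y := ((- 'i) ^+ wgt b y : algC).

(* The overlap of the coordinates of a and v is counted twice in
   wgt a + wgt v, and (-i)^2 = -1 = omega. *)
Lemma phaseD (a v : K) : phase v * phase a = phase (v + a) * w (a * v).
Proof.
rewrite -exprD -wgtD exprD exprM wtr_mul_coord omega_eqN1 sqrrN sqrCi.
by congr (_ * _ ^+ _); apply: eq_bigr => j _; rewrite andbC.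
Qed.

Lemma phase_neq0 (y : K) : phase y != 0.
Proof. by rewrite expf_neq0 // oppr_eq0 neq0Ci. Qed.

Lemma Wop_P1even (a c : K) :
  Wop 2 omega a c *m P1even b = P1even b *m ((phase a)^-1 *: Wop 2 omega a (c + a)).
Proof.
rewrite !WopE /P1even scale_mxK !mul_mxK; apply: eq_mxK => u v.
under eq_bigr => y _ do rewrite mulrCA.
rewrite sum_deltal; under eq_bigr => y _ do rewrite [u == y]eq_sym -mulrA.
rewrite sum_deltal; case: eqP => [->|_]; last by rewrite !mul0r !mulr0.
rewrite mulrDl wtrD // [c * v]mulrC !mul1r mulrCA [_ * (_ * w _)]mulrCA -phaseD.
by field; rewrite phase_neq0.
Qed.

End Char2.

Lemma sqrt2_neq0 (K : finFieldType) (g : K) : g != 0 -> sqrt2 g != 0.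
Proof.
move=> g_neq0; rewrite /sqrt2; case: pickP => [x /eqP sqr_x|_] /=.
  by apply: contraNneq g_neq0 => x0; rewrite -sqr_x x0 expr0n.
exact: oner_neq0.
Qed.

Definition Jconj (K : finFieldType) (p : nat) (omega : algC)
    (b : 'I_(mdeg K p) -> K) (A B : 'M[algC]_#|K|) : Prop :=
  exists2 U, inJ omega b U & exists2 c : algC, c != 0 & A *m U = U *m (c *: B).

Section Jconj.
Variables (K : finFieldType) (p : nat) (omega : algC) (b : 'I_(mdeg K p) -> K).
Hypotheses (pcharKp : p \in [pchar K]) (omega_prim : p.-primitive_root omega).
Local Notation w := (@wtr K p omega).
Local Notation W := (Wop p omega).
Local Notation Jconj := (Jconj omega b).

Lemma inJ_unit U : inJ omega b U -> U \in unitmx.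
Proof.
elim=> [|g g_neq0|g g_neq0| |U1 U2 _ U1u _ U2u|U1 _ U1u].
- exact: Fop_unit.
- rewrite /Pop; case: eqP => _; last exact: Podd_unit.
  by rewrite /Peven !unitmx_mul unitmx_inv Mop_unit ?sqrt2_neq0 ?P1even_unit.
- exact: Mop_unit.
- exact: unitmx1.
- by rewrite unitmx_mul U1u U2u.
- by rewrite unitmx_inv.
Qed.

Lemma Jconj_trans A B C : Jconj A B -> Jconj B C -> Jconj A C.
Proof.
move=> [U JU [c c_neq0 EU]] [V JV [d d_neq0 EV]].
exists (U *m V); first exact: inJ_mul.
exists (c * d); first by rewrite mulf_neq0.
rewrite mulmxA EU -scalemxAr -scalemxAl -[U *m B *m V]mulmxA EV.
by rewrite -!scalemxAr scalerA !mulmxA.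
Qed.

Lemma Jconj_sym A B : Jconj A B -> Jconj B A.
Proof.
move=> [U JU [c c_neq0 EU]]; have Uu := inJ_unit JU.
exists (invmx U); first exact: inJ_inv.
exists c^-1; first by rewrite invr_eq0.
have EUinv : invmx U *m A = c *: (B *m invmx U).
  by rewrite -[invmx U *m A](mulmxK Uu) -(mulmxA (invmx U) A U) EU mulKmx // scalemxAl.
by rewrite -scalemxAr EUinv scalerA mulVf // scale1r.
Qed.

Lemma Jconj_Mop a c g : g != 0 -> Jconj (W a c) (W (a / g) (c * g)).
Proof.
move=> g_neq0; exists (Mop g); first exact: inJ_M.
by exists 1; rewrite ?oner_eq0 // scale1r Wop_Mop.
Qed.

Lemma Jconj_Fop a c : Jconj (W a c) (W c (- a)).
Proof.
exists (Fop K p omega); first exact: inJ_F.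
by exists (w (- a * c)); [exact: wtr_neq0 | exact: Wop_Fop].
Qed.

Lemma Jconj_Wop0_10 a : a != 0 -> Jconj (W a 0) (W 1 0).
Proof. by move=> a_neq0; have := Jconj_Mop a 0 a_neq0; rewrite divff // mul0r. Qed.

Lemma Jconj_Wop_odd a c : p != 2%N -> a != 0 -> c != 0 -> Jconj (W a c) (W a 0).
Proof.
move=> p_neq2 a_neq0 c_neq0.
pose g := - c / a; have g_neq0 : g != 0 by rewrite mulf_neq0 ?oppr_eq0 ?invr_eq0.
exists (Pop omega b g); first exact: inJ_P.
exists (w (g * a ^+ 2 / 2)); first exact: wtr_neq0.
by rewrite /Pop (negbTE p_neq2) Wop_Podd // divfK // addrN.
Qed.

End Jconj.

Section Jconj2.
Variables (K : finFieldType) (omega : algC) (b : 'I_(mdeg K 2) -> K).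
Hypotheses (pcharK2 : 2%N \in [pchar K]) (omega_prim : 2.-primitive_root omega).
Hypothesis b_self_dual : self_dual b.
Local Notation W := (Wop 2 omega).

(* P1 is conjugate to P_1 = M_g^-1 P1 M_g, where g := sqrt2 1. *)
Lemma P1even_inJ : inJ omega b (P1even b).
Proof.
have g_neq0 : sqrt2 (1 : K) != 0 by rewrite sqrt2_neq0 ?oner_neq0.
have -> : P1even b = Mop (sqrt2 1) *m Pop omega b 1 *m invmx (Mop (sqrt2 1)).
  by rewrite /Pop eqxx /Peven !mulmxA mulmxV ?Mop_unit // mul1mx mulmxK ?Mop_unit.
apply: inJ_mul; last exact/inJ_inv/inJ_M.
by apply: inJ_mul; [exact: inJ_M | exact/inJ_P/oner_neq0].
Qed.

Lemma Jconj_P1even a c : Jconj omega b (W a c) (W a (c + a)).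
Proof.
exists (P1even b); first exact: P1even_inJ.
exists ((- 'i) ^+ wgt b a)^-1; first by rewrite invr_eq0 phase_neq0.
exact: Wop_P1even.
Qed.

Lemma sqrt_char2 (x : K) : exists y : K, y ^+ 2 = x.
Proof.
have sqr_inj : injective (fun y : K => y ^+ 2) := fmorph_inj (pFrobenius_aut pcharK2).
by have /codomP[y ->] := inj_card_onto sqr_inj (leqnn _) x; exists y.
Qed.

(* With g^2 = a / c, M_g maps (a, c) to (c g, c g), and P1 clears the second
   coordinate in characteristic 2. *)
Lemma Jconj_Wop_char2 a c : a != 0 -> c != 0 ->
  exists2 a', a' != 0 & Jconj omega b (W a c) (W a' 0).
Proof.
move=> a_neq0 c_neq0; have [g sqr_g] := sqrt_char2 (a / c).
have g_neq0 : g != 0.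
  by apply: contra_eqN sqr_g => /eqP->; rewrite expr0n eq_sym mulf_neq0 ?invr_eq0.
have a_g : a / g = c * g.
  by apply: (mulIf g_neq0); rewrite divfK // -mulrA -expr2 sqr_g mulrC divfK.
exists (c * g); first by rewrite mulf_neq0.
apply: Jconj_trans (Jconj_Mop omega b a c g_neq0) _; rewrite a_g.
have := Jconj_P1even (c * g) (c * g).
by rewrite -mulr2n -mulr_natr (pcharf0 pcharK2) mulr0.
Qed.

End Jconj2.

Lemma Jconj_Wop_10 (K : finFieldType) (p : nat) (pcharKp : p \in [pchar K])
    (omega : algC) (omega_prim : p.-primitive_root omega)
    (b : 'I_(mdeg K p) -> K) (b_self_dual : p = 2%N -> self_dual b) (a c : K) :
  (a, c) != (0, 0) -> Jconj omega b (Wop p omega a c) (Wop p omega 1 0).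
Proof.
have Jconj_a_neq0 a' c' :
    a' != 0 -> Jconj omega b (Wop p omega a' c') (Wop p omega 1 0).
  move=> a'_neq0; have to_10 := Jconj_Wop0_10 omega b.
  case: (eqVneq c' 0) => [->|c'_neq0]; first exact: to_10.
  case: (eqVneq p 2) => [p2|p_neq2]; last first.
    have Ja' := Jconj_Wop_odd b pcharKp omega_prim p_neq2 a'_neq0 c'_neq0.
    exact: Jconj_trans Ja' (to_10 _ a'_neq0).
  subst p; have [a'' a''_neq0 Ja'] :=
    Jconj_Wop_char2 pcharKp omega_prim (b_self_dual erefl) a'_neq0 c'_neq0.
  exact: Jconj_trans Ja' (to_10 _ a''_neq0).
case: (eqVneq a 0) => [->|a_neq0] ac_neq0; last exact: Jconj_a_neq0.
have c_neq0 : c != 0 by apply: contraNneq ac_neq0 => ->.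
exact: Jconj_trans (Jconj_Fop b pcharKp omega_prim 0 c) (Jconj_a_neq0 _ _ c_neq0).
Qed.

Unset Implicit Arguments.

Theorem corollary1 (K : finFieldType) (p : nat) (hp : p \in [pchar K])
  (omega : algC) (homega : p.-primitive_root omega)
  (b : 'I_(mdeg K p) -> K) (hb : p = 2%N -> @self_dual K p b) :
  forall alpha beta alpha' beta' : K,
    (alpha, beta) != (0, 0) -> (alpha', beta') != (0, 0) ->
    exists2 U, @inJ K p omega b U &
      exists c : algC,
        invmx U *m (Xop alpha *m Zop p omega beta) *m U
        = c *: (Xop alpha' *m Zop p omega beta').
Proof.
move=> a c a' c' ac_neq0 ac'_neq0.
have [U JU [d _ EU]] := Jconj_trans (Jconj_Wop_10 hp homega hb ac_neq0)
  (Jconj_sym hp homega (Jconj_Wop_10 hp homega hb ac'_neq0)).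
exists U => //; exists d.
by rewrite -mulmxA -/(Wop _ _ a c) EU mulKmx ?(inJ_unit hp homega JU).
Qed.
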